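(* Let $C>0$ and let $\mu_i$ ($i\in\mathbb{N}$) and $\mu$ be finite Borel measures on $\mathbb{R}$ supported on the compact interval $[0,C]$. Suppose that $\mu_i$ converges weakly to $\mu$ and that there is $\delta>0$ with $\det(\mu_i)\geq\delta$ for all $i$. Then $\lim_{i\to\infty}\mu_i(\{0\}) = \mu(\{0\})$.
   Context: Weak convergence $\mu_i\to\mu$ means $\lim_i\int f\,d\mu_i=\int f\,d\mu$ for every bounded continuous $f\colon\mathbb{R}\to\mathbb{C}$. The Fuglede-Kadison determinant of a finite compactly supported Borel measure $\nu$ on $\mathbb{R}$ is $\det(\nu)=\exp\int_{(0,\infty)}\ln(t)\,d\nu(t)$ (interpreted as $0$ if the integral is $-\infty$). *)

From HB Require Import structures.
From mathcomp Require Import all_boot all_order all_algebra.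
From mathcomp Require Import all_classical all_reals all_analysis.
Set Implicit Arguments. Unset Strict Implicit. Unset Printing Implicit Defensive.
Import Order.TTheory GRing.Theory Num.Theory.
Import numFieldNormedType.Exports.
Local Open Scope classical_set_scope.
Local Open Scope ring_scope.
Local Open Scope ereal_scope.

Definition supported_on (R : realType) (C : R)
    (nu : {measure set R -> \bar R}) : Prop :=
  nu (~` `[0%R, C]) = 0.

Definition weak_cvg (R : realType) (mu_ : nat -> {measure set R -> \bar R})
    (mu : {measure set R -> \bar R}) : Prop :=
  forall f : R -> R, continuous f -> (exists M : R, forall x, (`|f x| <= M)%R) ->
    (fun i => \int[mu_ i]_x (f x)%:E) @ \oo --> \int[mu]_x (f x)%:E.

(* Fuglede-Kadison determinant: exp (\int_{(0,oo)} ln t dnu), and 0 if the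
   integral is -oo. (The +oo case cannot occur for compactly supported finite
   measures; it is mapped to +oo.) *)
Definition fk_det (R : realType) (nu : {measure set R -> \bar R}) : \bar R :=
  match \int[nu]_(t in `]0%R, +oo[) (ln t)%:E with
  | r%:E => (expR r)%:E
  | +oo => +oo
  | -oo => 0
  end.

From HB Require Import structures.
From mathcomp Require Import all_boot all_order all_algebra.
From mathcomp Require Import all_classical all_reals all_analysis.
From mathcomp Require Import measurable_realfun lra.

(* Let [ramp eps] be the continuous cutoff that is 1 at 0 and vanishes beyond
   [eps].  For a measure nu supported on [0, C],
     nu {0} <= \int ramp eps dnu <= nu {0} + nu ]0, eps].
   The determinant bound makes the last term uniformly small: the positive part
   of \int_(0,oo) ln is at most max(0, ln C) times the total mass, which weak
   convergence bounds along the sequence, while the negative part is at least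
   -ln eps * nu ]0, eps].  Thus mu_i ]0, eps] <= K / -ln eps with K independent
   of i, so the atoms at 0 are uniformly approximated by the integrals of
   [ramp eps], which converge by weak convergence. *)
Import Order.TTheory GRing.Theory Num.Theory.
Import numFieldNormedType.Exports.
Local Open Scope classical_set_scope.
Local Open Scope ring_scope.

Section ramp.
Context {R : realType}.
Implicit Types eps x : R.

Definition ramp eps x : R := Num.min 1 (Num.max 0 (1 - x / eps)).

Lemma ramp_continuous eps : continuous (ramp eps).
Proof.
move=> x.
apply: (@continuous_min _ _ (cst 1) (fun x => Num.max 0 (1 - x / eps))).
  exact: cst_continuous.
apply: (@continuous_max _ _ (cst 0) (fun x => 1 - x / eps)).
  exact: cst_continuous.
apply: continuousB; first exact: cst_continuous.
by apply: continuousM; [exact: cvg_id | exact: cst_continuous].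
Qed.

Lemma ramp_ge0 eps x : 0 <= ramp eps x.
Proof. by rewrite le_min ler01 le_max lexx. Qed.

Lemma ramp_le1 eps x : ramp eps x <= 1.
Proof. by rewrite ge_min lexx. Qed.

Lemma ramp_bounded eps : exists M : R, forall x, `|ramp eps x| <= M.
Proof. by exists 1 => x; rewrite ger0_norm ?ramp_ge0 ?ramp_le1. Qed.

Lemma ramp0 eps : ramp eps 0 = 1.
Proof. by rewrite /ramp mul0r subr0 (max_idPr ler01) minxx. Qed.

Lemma ramp_gt eps x : 0 < eps -> eps < x -> ramp eps x = 0.
Proof.
move=> eps0 epsx; rewrite /ramp (max_idPl _) ?min_r ?ler01//.
by rewrite subr_le0 ler_pdivlMr// mul1r ltW.
Qed.

Lemma measurable_ramp eps :
  measurable_fun [set: R] (fun x => (ramp eps x)%:E)%E.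
Proof.
apply/measurable_EFinP.
exact: continuous_measurable_fun (ramp_continuous eps).
Qed.

End ramp.

Lemma near0_div_Nln_le {R : realType} {K e : R} : 0 < e ->
  \forall eps \near 0^'+, K / - ln eps <= e.
Proof.
move=> e0; near=> eps.
have lneps : ln eps <= - (K / e) by near: eps; exact: (cvgrNy_le (@lnNy R)).
have Nln0 : 0 < - ln eps.
  by rewrite oppr_gt0 ln_lt0//; apply/andP; split; near: eps;
    [exact: nbhs_right_gt | exact: nbhs_right_lt].
by rewrite ler_pdivrMr// -ler_pdivrMl// mulrC; lra.
Unshelve. all: by end_near. Qed.

Lemma cvge_sandwich_approx {R : realType} (u : nat -> \bar R) (l : R) :
  (forall i, u i \is a fin_num) ->
  (forall e : R, 0 < e -> exists v : nat -> \bar R, exists m : \bar R,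
     [/\ v @ \oo --> m, (l%:E <= m <= l%:E + e%:E)%E &
         \forall i \near \oo, (u i <= v i <= u i + e%:E)%E]) ->
  u @ \oo --> l%:E.
Proof.
move=> ufin approx; apply/fine_cvgP; split; first exact: nearW.
apply/cvgrPdist_le => e e0; have e30 : 0 < e / 3 by rewrite divr_gt0.
have [v [m [vm /andP[lm ml] uv]]] := approx _ e30.
have mfin : m \is a fin_num.
  rewrite fin_numE gt_eqF ?(lt_le_trans _ lm) ?ltNyr//.
  by rewrite lt_eqF ?(le_lt_trans ml) ?ltry.
rewrite -(fineK mfin) !lee_fin in lm ml vm.
have /fine_cvgP[vfin /cvgrPdist_le/(_ _ e30) vm'] := vm.
near=> i; have /andP[] : (u i <= v i <= u i + (e / 3)%:E)%E by near: i.
have vi : v i \is a fin_num by near: i.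
rewrite -(fineK (ufin i)) -(fineK vi) -EFinD !lee_fin.
have : `|fine m - fine (v i)| <= e / 3 by near: i.
rewrite !ler_norml /=; lra.
Unshelve. all: by end_near. Qed.

Section measure_near_zero.
Local Open Scope ereal_scope.
Context {R : realType} {nu : {measure set R -> \bar R}}.

Lemma measure0_le_integral_ramp (eps : R) :
  nu [set 0%R] <= \int[nu]_x (ramp eps x)%:E.
Proof.
have -> : nu [set 0%R] = \int[nu]_(x in [set 0%R]) (ramp eps x)%:E.
  rewrite -[LHS]mul1e -integral_cst//; apply: eq_integral => x.
  by rewrite inE => ->; rewrite ramp0.
apply: ge0_subset_integral => //; first exact: measurable_ramp.
by move=> x _; rewrite lee_fin ramp_ge0.
Qed.

Context {C : R} (nu_supp : supported_on C nu).

Lemma integral_ramp_le {eps : R} : (0 < eps)%R ->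
  \int[nu]_x (ramp eps x)%:E <= nu [set 0%R] + nu `]0%R, eps]%classic.
Proof.
move=> eps0; apply: (@le_trans _ _ (\int[nu]_x (\1_`]-oo, eps]%classic x)%:E)).
  apply: ge0_le_integral => //.
  - by move=> x _; rewrite lee_fin ramp_ge0.
  - exact: measurable_ramp.
  - exact/measurable_EFinP/measurable_indic.
  move=> x _; rewrite lee_fin indicE; case: (boolP (x \in _)) => [_|].
    exact: ramp_le1.
  rewrite notin_setE /= in_itv /= => /negP; rewrite -ltNge => epsx.
  by rewrite ramp_gt.
rewrite integral_indic// setIT.
have split_le :
    `]-oo, eps]%classic `<=`
    ~` `[0%R, C] `|` ([set 0%R] `|` `]0%R, eps]%classic).
  move=> x /=; rewrite !in_itv /= => xe.
  by have [x0|x0|->] := ltgtP x 0%R; [left | right; right | right; left].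
apply: (le_trans (le_measure _ _ _ split_le)); rewrite ?inE//.
  by apply: measurableU; [apply: measurableC | apply: measurableU].
apply: (le_trans (measureU2 _ _ _)).
- exact: measurableC.
- exact: measurableU.
rewrite -[X in _ <= X]add0e; apply: leeD; last exact: measureU2.
by move/eqP: nu_supp; rewrite eq_le => /andP[nu_out _]; exact: nu_out.
Qed.

Lemma integral_ln_pos_le {M : R} : nu setT <= M%:E ->
  \int[nu]_(t in `]0%R, +oo[) (fun t => (ln t)%:E)^\+ t
    <= (Num.max 0 (ln C) * M)%:E.
Proof.
move=> numass; have lnC0 : (0 <= Num.max 0 (ln C))%R by rewrite le_max lexx.
apply: (@le_trans _ _
  (\int[nu]_(t in `]0%R, +oo[) cst (Num.max 0 (ln C))%:E t)).
  apply: ae_ge0_le_integral => //.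
    apply/measurable_funepos/measurable_EFinP.
    by apply: (measurable_funS measurableT) => //; exact: measurable_ln.
  exists (~` `[0%R, C]); split => //; first exact: measurableC.
  move=> t /= ltC; apply: contra_notP ltC => /contrapT.
  rewrite !in_itv /= andbT => /andP[_ tC] t0.
  rewrite funeposE ge_max !lee_fin lnC0 andbT le_max.
  by rewrite ler_ln ?posrE ?(lt_le_trans t0) ?tC ?orbT.
rewrite integral_cst//= EFinM lee_wpmul2l ?lee_fin//.
by apply: le_trans numass; apply: le_measure; rewrite ?inE.
Qed.

Lemma integral_ln_neg_ge {eps : R} : (0 < eps)%R -> (eps <= 1)%R ->
  (- ln eps)%:E * nu `]0%R, eps]%classic
    <= \int[nu]_(t in `]0%R, +oo[) (fun t => (ln t)%:E)^\- t.
Proof.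
move=> eps0 eps1; have Nln0 : (0 <= - ln eps)%R by rewrite oppr_ge0 ln_le0.
have -> : nu `]0%R, eps]%classic =
    \int[nu]_(t in `]0%R, +oo[) (\1_`]0%R, eps]%classic t)%:E.
  rewrite integral_indic//; congr (nu _); apply/seteqP; split => x /=.
    by rewrite !in_itv /= => /andP[x0 xe]; rewrite x0.
  by case.
rewrite -ge0_integralZl_EFin//; last exact/measurable_EFinP/measurable_indic.
apply: ge0_le_integral => //.
- by move=> t _; rewrite mule_ge0// lee_fin.
- exact/measurable_EFinP/measurable_funM/measurable_indic.
- apply/measurable_funeneg/measurable_EFinP.
  by apply: (measurable_funS measurableT) => //; exact: measurable_ln.
move=> t; rewrite /= in_itv /= andbT => t0.
rewrite funenegE indicE; case: (boolP (t \in _)) => [|_]; last first.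
  by rewrite mule0 le_max lexx orbT.
rewrite inE /= in_itv /= => /andP[_ te].
by rewrite mule1 le_max lee_fin lerN2 ler_ln ?posrE ?te.
Qed.

Lemma measure_itv0_le_det {delta M eps : R} :
  (0 < delta)%R -> (0 < eps)%R -> (eps < 1)%R -> delta%:E <= fk_det nu ->
  nu setT <= M%:E ->
  nu `]0%R, eps]%classic <= ((Num.max 0 (ln C) * M - ln delta) / - ln eps)%:E.
Proof.
move=> delta0 eps0 eps1 det_ge numass.
have Nln0 : (0 < - ln eps)%R by rewrite oppr_gt0 ln_lt0 ?eps0.
have pos_le := integral_ln_pos_le numass.
have neg_ge := integral_ln_neg_ge eps0 (ltW eps1).
have nufin : nu `]0%R, eps]%classic \is a fin_num.
  rewrite ge0_fin_numE// (le_lt_trans _ (ltry M))// (le_trans _ numass)//.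
  by apply: le_measure; rewrite ?inE.
rewrite -(fineK nufin) in neg_ge *.
move: det_ge; rewrite /fk_det integralE.
have : 0 <= \int[nu]_(t in `]0%R, +oo[) (fun t => (ln t)%:E)^\+ t.
  by apply: integral_ge0 => t _; exact: funepos_ge0.
have : 0 <= \int[nu]_(t in `]0%R, +oo[) (fun t => (ln t)%:E)^\- t.
  by apply: integral_ge0 => t _; exact: funeneg_ge0.
move: pos_le neg_ge.
case: (\int[nu]_(t in _) _ ^\+ t) => [p| |] //.
case: (\int[nu]_(t in _) _ ^\- t) => [n| |] //=.
  rewrite !lee_fin => pC nn _ _ dp; rewrite ler_pdivlMr// mulrC.
  have : (ln delta <= p - n)%R.
    by rewrite -[(p - n)%R]expRK ler_ln ?posrE ?expR_gt0.
  lra.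
by move=> _ _ _ _; rewrite lee_fin leNgt delta0.
Qed.
End measure_near_zero.

Lemma measure_itv0_near0_lt {R : realType}
    {nu : {finite_measure set R -> \bar R}} {e : R} : 0 < e ->
  \forall eps \near (0 : R)^'+, (nu `]0%R, eps]%classic < e%:E)%E.
Proof.
move=> e0; pose F n : set R := `]0, n.+1%:R^-1]%classic.
have mF n : measurable (F n) by exact: measurable_itv.
have F_nonincr : nonincreasing_seq F.
  move=> m n mn; apply/subsetPset => x.
  rewrite /F /= !in_itv /= => /andP[-> xm].
  by rewrite (le_trans xm)// lef_pV2 ?posrE// ler_nat ltnS.
have F_cap : \bigcap_n F n = set0.
  apply/seteqP; split => // x Fx.
  have /andP[x0 _] : 0 < x <= 1%:R^-1 by have := Fx 0%N I; rewrite /F /= in_itv.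
  have [N _ /(_ N (leqnn N)) Nx] := near_infty_natSinv_lt (PosNum x0).
  have := Fx N I; rewrite /F /= in_itv /= => /andP[_ xN].
  by have := le_lt_trans xN Nx; rewrite ltxx.
have nuF : nu \o F @ \oo --> 0%E.
  rewrite -(measure0 nu) -F_cap; apply: nonincreasing_cvg_mu => //.
  - by rewrite ltey_eq fin_num_measure.
  - by rewrite F_cap.
have e0E : (0 < e%:E)%E by rewrite lte_fin.
have /filter_ex[N nuFN] : \forall n \near \oo, (nu (F n) < e%:E)%E :=
  nuF _ (open_ereal_lt' e0E).
near=> eps; apply: le_lt_trans nuFN; apply: le_measure; rewrite ?inE//.
move=> x /=; rewrite /F /= !in_itv /= => /andP[-> xe]; rewrite (le_trans xe)//.
by near: eps; apply: nbhs_right_le; rewrite invr_gt0.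
Unshelve. all: by end_near. Qed.

Lemma weak_cvg_mass_bounded {R : realType}
    {mu_ : nat -> {finite_measure set R -> \bar R}}
    {mu : {finite_measure set R -> \bar R}} :
  weak_cvg mu_ mu -> exists M : R, \forall i \near \oo, (mu_ i setT <= M%:E)%E.
Proof.
move=> hweak; have mass (nu : {finite_measure set R -> \bar R}) :
    (\int[nu]_x (cst 1%R x)%:E = nu setT)%E.
  by rewrite (@integral_cst _ _ _ nu setT measurableT 1%E) mul1e.
have one_bounded : exists M : R, forall x : R, `|cst 1 x| <= M.
  by exists 1 => x; rewrite normr1.
have mass_cvg : (fun i => mu_ i setT) @ \oo --> mu setT.
  have := hweak (cst 1) (@cst_continuous _ _ _) one_bounded.
  by rewrite mass; under eq_fun do rewrite mass.
have fin_mass : mu setT \is a fin_num by exact: fin_num_measure.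
have mass_lt : (mu setT < (fine (mu setT) + 1)%:E)%E.
  by rewrite -[X in (X < _)%E](fineK fin_mass) lte_fin ltrDl.
have mass_near :
    \forall i \near \oo, (mu_ i setT < (fine (mu setT) + 1)%:E)%E :=
  mass_cvg _ (open_ereal_lt' mass_lt).
by exists (fine (mu setT) + 1); near=> i; apply/ltW; near: i.
Unshelve. all: by end_near. Qed.

Theorem mainTheorem3 (R : realType) (C : R) (hC : 0 < C)
    (mu_ : nat -> {finite_measure set R -> \bar R})
    (mu : {finite_measure set R -> \bar R})
    (hsupp_ : forall i, supported_on C (mu_ i))
    (hsupp : supported_on C mu)
    (hweak : weak_cvg mu_ mu)
    (delta : R) (hdelta : 0 < delta)
    (hdet : forall i, (delta%:E <= fk_det (mu_ i))%E) :
  (fun i => mu_ i [set 0]) @ \oo --> mu [set 0].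
Proof.
have [M massM] := weak_cvg_mass_bounded hweak.
have atom_fin (nu : {finite_measure set R -> \bar R}) : nu [set 0] \is a fin_num
  by exact: fin_num_measure.
rewrite -(fineK (atom_fin mu)); apply: cvge_sandwich_approx => [i|e e0].
  exact: atom_fin.
have /filter_ex[eps [eps0 eps1 mu_small det_small]] :
    \forall eps \near (0 : R)^'+,
      [/\ 0 < eps, eps < 1, (mu `]0%R, eps]%classic < e%:E)%E
         & (Num.max 0 (ln C) * M - ln delta) / - ln eps <= e].
  near=> eps; split; near: eps.
  - exact: nbhs_right_gt.
  - exact: nbhs_right_lt ltr01.
  - exact: measure_itv0_near0_lt.
  - exact: near0_div_Nln_le.
exists (fun i => \int[mu_ i]_x (ramp eps x)%:E)%E.
exists (\int[mu]_x (ramp eps x)%:E)%E; split.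
- exact: hweak _ (ramp_continuous eps) (ramp_bounded eps).
- rewrite fineK ?atom_fin// measure0_le_integral_ramp /=.
  apply: le_trans (integral_ramp_le hsupp eps0) _.
  by rewrite leeD2l ?atom_fin// ltW.
- near=> i; have massMi : (mu_ i setT <= M%:E)%E by near: i.
  rewrite measure0_le_integral_ramp /=.
  apply: le_trans (integral_ramp_le (hsupp_ i) eps0) _.
  rewrite leeD2l ?atom_fin//.
  have := measure_itv0_le_det (hsupp_ i) hdelta eps0 eps1 (hdet i) massMi.
  by move/le_trans; apply; rewrite lee_fin.
Unshelve. all: by end_near. Qed.
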